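(* Let $A\subseteq[n]$ be nonempty. There is a bijection $\rho$ from the set of rooted trees on $A$ in which $\max(A)$ is a leaf to the set of ordered forests on $A\setminus\{\max(A)\}$.
   Context: A rooted tree on a finite set $A$ is a tree with vertex set $A$ and a distinguished vertex (the root); a leaf is a vertex with no children (children being taken with respect to the root). An ordered forest on a finite set $X$ is a tuple of rooted trees whose vertex sets form a partition of $X$ (the empty tuple when $X=\emptyset$). *)

From mathcomp Require Import all_boot.
Set Implicit Arguments. Unset Strict Implicit. Unset Printing Implicit Defensive.

(* A (simple, undirected) graph on a finite type is given by its edge set,
   a set of 2-element subsets. Adjacency relation of an edge set: *)
Definition adj (T : finType) (E : {set {set T}}) : rel T :=
  fun x y => [set x; y] \in E.

Definition is_rooted_tree (T : finType) (V : {set T}) (E : {set {set T}}) (r : T)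
  : Prop :=
  [/\ r \in V,
      (forall e, e \in E ->
         exists x y, [/\ x \in V, y \in V, x != y & e = [set x; y]]),
      (forall x y, x \in V -> y \in V -> connect (adj E) x y)
    & (forall s : seq T, uniq s -> 2 < size s -> ~~ cycle (adj E) s)].

(* u is a child of v (w.r.t. root r) in the tree with edges E:
   {u,v} is an edge and, after deleting this edge, v is still connected
   to the root (so the edge points away from the root, from v to u). *)
Definition is_child (T : finType) (E : {set {set T}}) (r u v : T) : Prop :=
  [set u; v] \in E /\ connect (adj (E :\ [set u; v])) r v.

Definition is_leaf (T : finType) (E : {set {set T}}) (r v : T) : Prop :=
  forall u, ~ is_child E r u v.

Definition rooted_tree_on (T : finType) (A : {set T})
  (t : {set {set T}} * T) : Prop :=
  is_rooted_tree A t.1 t.2.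

(* Ordered forests on X: finite sequences of rooted trees
   (vertex set, edge set, root) whose vertex sets form a partition of X
   (blocks are nonempty since they contain the root; pairwise disjoint;
   union equal to X). For X empty this is only the empty sequence. *)
Definition ordered_forest_on (T : finType) (X : {set T})
  (f : seq ({set T} * {set {set T}} * T)) : Prop :=
  let Vs := map (fun t => t.1.1) f in
  [/\ (forall t, t \in f -> is_rooted_tree t.1.1 t.1.2 t.2),
      (forall i j, i < size f -> j < size f -> i != j ->
          [disjoint (nth set0 Vs i) & (nth set0 Vs j)])
    & \bigcup_(V <- Vs) V = X].

Definition bij_between (A B : Type) (P : A -> Prop) (Q : B -> Prop) (f : A -> B)
  : Prop :=
  [/\ (forall x, P x -> Q (f x)),
      (forall x y, P x -> P y -> f x = f y -> x = y)
    & (forall y, Q y -> exists x, P x /\ f x = y)].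

From mathcomp Require Import all_boot.
Set Implicit Arguments. Unset Strict Implicit. Unset Printing Implicit Defensive.

(* Linking the roots r1, ..., rk of an ordered forest by the path r1 - r2 - ... - rk - m
   gives a tree rooted at r1 in which m is a leaf.  Conversely, in a tree rooted at r with
   leaf m != r, cut the first edge {r, s} of the path from r to m: the component of r is
   the first tree of the forest, and the other component is a tree rooted at s in which m
   is still a leaf, so the construction recurses.  The two maps are mutually inverse
   because every edge of a tree is a bridge, so s is the only neighbour of r from which m
   can be reached without going back through r. *)

Lemma disjoint_setU1r (T : finType) (A B : {set T}) x :
  x \notin A -> [disjoint A & B] -> [disjoint A & x |: B].
Proof.
move=> xA dAB.
by rewrite -setI_eq0 setIUr setU_eq0 !setI_eq0 dAB andbT disjoint_sym disjoints1.
Qed.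

Lemma setIdUN (T : finType) (A : {set T}) (P : pred T) :
  [set x in A | P x] :|: [set x in A | ~~ P x] = A.
Proof. by apply/setP => x; rewrite !inE -andb_orr orbN andbT. Qed.

Lemma setU1D1C (T : finType) (A : {set T}) a b : a != b -> (a |: A) :\ b = a |: (A :\ b).
Proof.
by move=> ab; apply/setP => x; rewrite !inE; case: (x =P a) => // ->; rewrite (negbTE ab).
Qed.

Section Graphs.
Variable T : finType.
Implicit Types (V W : {set T}) (E F : {set {set T}}).

Definition edges_on V E := forall e, e \in E ->
  exists x y, [/\ x \in V, y \in V, x != y & e = [set x; y]].

Definition acyclic E := forall p : seq T, uniq p -> 2 < size p -> ~~ cycle (adj E) p.

Definition all_bridges E := forall x y, [set x; y] \in E -> x != y ->
  ~~ connect (adj (E :\ [set x; y])) x y.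

Lemma adj_sym E : symmetric (adj E).
Proof. by move=> x y; rewrite /adj setUC. Qed.

Lemma adj_connect_sym E : connect_sym (adj E).
Proof. exact/sym_connect_sym/adj_sym. Qed.

Lemma connect_adjS E F x y : E \subset F -> connect (adj E) x y -> connect (adj F) x y.
Proof. by move=> sEF; apply: connect_sub => a b ab; apply/connect1/(subsetP sEF). Qed.

Lemma set2_eq_cases (a b c d : T) : [set a; b] = [set c; d] ->
  (a = c /\ b = d) \/ (a = d /\ b = c).
Proof.
move=> eab.
have : [&& a \in [set c; d], b \in [set c; d], c \in [set a; b] & d \in [set a; b]].
  by rewrite -eab !set21 !set22 eab !set21 !set22.
rewrite !inE => /and4P [].
by do 4 case/orP=> /eqP ?; subst; auto.
Qed.

Lemma edges_on_adj V E x y : edges_on V E -> adj E x y -> [/\ x \in V, y \in V & x != y].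
Proof.
move=> onE /onE [a [b [aV bV ab /set2_eq_cases [[-> ->]|[-> ->]]]]]; split=> //.
by rewrite eq_sym.
Qed.

Lemma edges_onS V E F : F \subset E -> edges_on V E -> edges_on V F.
Proof. by move=> sFE onE e /(subsetP sFE) /onE. Qed.

Lemma connect_restrict (e e' : rel T) (S : {set T}) :
  (forall x y, x \in S -> e x y -> e' x y && (y \in S)) ->
  forall x y, x \in S -> connect e x y -> connect e' x y && (y \in S).
Proof.
move=> step x y xS /connectP [p pp ->].
elim: p x xS pp => [|z p IH] x xS /=; first by rewrite connect0 xS.
case/andP=> /(step _ _ xS) /andP [e'xz zS] /(IH _ zS) /andP [c ->].
by rewrite (connect_trans (connect1 e'xz) c).
Qed.

Lemma connect_setU1 E x y u v :
  connect (adj ([set x; y] |: E)) u v ->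
  [\/ connect (adj E) u v, connect (adj E) u x /\ connect (adj E) y v
    | connect (adj E) u y /\ connect (adj E) x v].
Proof.
move/connectP=> [p pp ->] {v}.
elim: p u pp => [|w p IH] u /=; first by move=> _; constructor 1.
case/andP=> uw /IH {IH}; case/setU1P: uw => [/set2_eq_cases [[-> ->]|[-> ->]] | uw].
- by case=> [h|[_ h]|[_ h]]; [apply: Or32 | apply: Or32 | apply: Or31] => //.
- by case=> [h|[_ h]|[_ h]]; [apply: Or33 | apply: Or31 | apply: Or33] => //.
- have c := connect1 (uw : adj E u w).
  case=> [h|[h1 h2]|[h1 h2]]; [apply: Or31 | apply: Or32 | apply: Or33];
  by [exact: connect_trans c h | split=> //; exact: connect_trans c h1].
Qed.

Lemma path_avoid_edge E x y z p : x \notin z :: p -> path (adj E) z p ->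
  path (adj (E :\ [set x; y])) z p.
Proof.
elim: p z => [|w p IH] z //=.
rewrite !inE !negb_or => /and3P [xz xw xp] /andP [azw pw].
rewrite IH ?inE ?negb_or ?xw // andbT /adj in_setD1 (azw : [set z; w] \in E) andbT.
by apply/eqP => /set2_eq_cases [[zx _]|[_ wx]]; [move: xz | move: xw];
  rewrite ?zx ?wx eqxx.
Qed.

Lemma acyclic_all_bridges E : acyclic E -> all_bridges E.
Proof.
move=> acE x y xyE xy; apply/negP => /connectP [p pp lp].
case/shortenP: pp lp => p' pp' up' _ lp.
case: p' pp' up' lp => [|z [|w q]].
- by move=> _ _ /= yx; rewrite yx eqxx in xy.
- by rewrite /= andbT => h _ yz; move: h; rewrite -yz /adj in_setD1 eqxx.
- move=> pp' up' ly; apply: (negP (acE [:: x, z, w & q] up' isT)).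
  rewrite /cycle rcons_path -ly adj_sym /adj xyE andbT.
  by apply: sub_path pp' => a b; rewrite /adj in_setD1 => /andP [].
Qed.

Lemma all_bridges_acyclic E : all_bridges E -> acyclic E.
Proof.
move=> brE [|x [|z [|w q]]] // up _; apply/negP.
rewrite /cycle rcons_path => /andP [/= /andP [xz pzq] yx].
set y := last x [:: z, w & q] in yx.
have yq : y \in w :: q by rewrite /y /= mem_last.
move: up; rewrite /= !inE !negb_or => /andP [/and3P [xz' xw xq] /andP [/andP [zw zq] _]].
have xy : x != y.
  by apply: contraNneq (_ : x \notin w :: q) => [->|] //; rewrite inE negb_or xw.
have zy : z != y.
  by apply: contraNneq (_ : z \notin w :: q) => [->|] //; rewrite inE negb_or zw.
have xyE : [set x; y] \in E by rewrite adj_sym in yx.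
apply: (negP (brE x y xyE xy)); apply/connectP; exists [:: z, w & q] => //=.
apply/andP; split; last first.
  by apply: (@path_avoid_edge E x y z (w :: q) _ pzq); rewrite !inE !negb_or xz' xw.
rewrite /adj in_setD1 (xz : [set x; z] \in E) andbT.
by apply/eqP => /set2_eq_cases [[_ /eqP]|[/eqP]]; rewrite ?(negbTE zy) ?(negbTE xy).
Qed.

Lemma connect_disjoint_setU V W E F x y :
  edges_on V E -> edges_on W F -> [disjoint V & W] -> x \in V ->
  connect (adj (E :|: F)) x y -> connect (adj E) x y && (y \in V).
Proof.
move=> onE onF dVW; apply: connect_restrict => a b aV.
rewrite /adj in_setU => /orP [ab|/(edges_on_adj onF) [aW _ _]].
- by rewrite ab; case: (edges_on_adj onE ab).
- by rewrite (disjointFr dVW aV) in aW.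
Qed.

Lemma connect_edges_on V E x y : edges_on V E -> x \in V -> connect (adj E) x y -> y \in V.
Proof.
move=> onE xV cxy; suff /andP [] : connect (adj E) x y && (y \in V) by [].
apply: (connect_restrict _ xV cxy) => a b _ ab.
by rewrite ab; case: (edges_on_adj onE ab).
Qed.

Lemma all_bridges_setU V W E F : edges_on V E -> edges_on W F -> [disjoint V & W] ->
  all_bridges E -> all_bridges F -> all_bridges (E :|: F).
Proof.
suff bridgeE : forall V W E F, edges_on V E -> edges_on W F -> [disjoint V & W] ->
    all_bridges E -> forall x y, [set x; y] \in E -> x != y ->
    ~~ connect (adj ((E :|: F) :\ [set x; y])) x y.
  move=> onE onF dVW brE brF x y; rewrite in_setU => /orP [xyE|xyF].
  - exact: (bridgeE V W).
  - by rewrite setUC; apply: (bridgeE W V) => //; rewrite disjoint_sym.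
move=> {}V {}W {}E {}F onE onF dVW brE x y xyE xy; apply/negP; rewrite setDUl.
have [xV _ _] := edges_on_adj onE xyE.
have onE' := edges_onS (subD1set E [set x; y]) onE.
have onF' := edges_onS (subD1set F [set x; y]) onF.
case/(connect_disjoint_setU onE' onF' dVW xV)/andP => c _.
by move: (brE x y xyE xy); rewrite c.
Qed.

Lemma all_bridges_setU1 E x y : all_bridges E -> x != y -> ~~ connect (adj E) x y ->
  all_bridges ([set x; y] |: E).
Proof.
move=> brE xy nxy.
have xyE : [set x; y] \notin E by apply: contra nxy; exact: connect1.
move=> a b /setU1P [eab|abE] ab.
- rewrite eab setU1K //.
  by case: (set2_eq_cases eab) => [[-> ->]|[-> ->]]; rewrite // adj_connect_sym.
- have ne : [set x; y] != [set a; b] by apply: contraNneq xyE => ->.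
  rewrite setU1D1C //.
  have cE := connect_adjS (subD1set E [set a; b]).
  apply/negP => /connect_setU1 [h|[h1 h2]|[h1 h2]].
  + exact: (negP (brE a b abE ab)).
  + apply: (negP nxy); rewrite adj_connect_sym in h1; rewrite adj_connect_sym in h2.
    by apply: connect_trans (cE _ _ h1) (connect_trans (connect1 abE) (cE _ _ h2)).
  + apply: (negP nxy); apply: connect_trans (cE _ _ h2) (connect_trans _ (cE _ _ h1)).
    by apply: connect1; rewrite adj_sym.
Qed.

Lemma component_rooted_tree V E F c : edges_on V E -> acyclic E -> F \subset E ->
  let C := [set x | connect (adj F) c x] in
  is_rooted_tree C [set e in F | e \subset C] c.
Proof.
move=> onE acE sFE C.
have onF := edges_onS sFE onE.
split.
- by rewrite inE connect0.
- move=> e; rewrite inE => /andP [/onF [x [y [_ _ xy ee]]] eC].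
  by exists x, y; split=> //; apply: (subsetP eC); rewrite ee !inE eqxx ?orbT.
- have c_c x : x \in C -> connect (adj [set e in F | e \subset C]) c x.
    rewrite [x \in C]inE => cx.
    have cC : c \in C by rewrite inE connect0.
    suff /andP [] : connect (adj [set e in F | e \subset C]) c x && (x \in C) by [].
    apply: (connect_restrict _ cC cx) => a b aC ab.
    have bC : b \in C.
      by move: aC; rewrite !inE => ca; apply: connect_trans ca (connect1 ab).
    by rewrite bC andbT /adj inE (ab : [set a; b] \in F) subUset !sub1set aC bC.
  by move=> x y xC yC; apply: connect_trans (c_c y yC); rewrite adj_connect_sym c_c.
- move=> p up sp; apply: contra (acE p up sp); apply: sub_cycle => x y.
  by rewrite /adj inE => /andP [/(subsetP sFE)].
Qed.

Lemma rooted_tree_split V E c r s : is_rooted_tree V E c -> [set r; s] \in E ->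
  let E0 := E :\ [set r; s] in
  let C := [set x | connect (adj E0) r x] in
  [/\ C \subset V, is_rooted_tree C [set e in E0 | e \subset C] r,
      is_rooted_tree (V :\: C) [set e in E0 | ~~ (e \subset C)] s
    & ~~ connect (adj E0) r s].
Proof.
move=> [cV onE cE acE] rsE E0 C.
have [rV sV rs] := edges_on_adj onE rsE.
have sE0E : E0 \subset E := subD1set E _.
have onE0 := edges_onS sE0E onE.
have nrs : ~~ connect (adj E0) r s := acyclic_all_bridges acE rsE rs.
pose C' := [set x | connect (adj E0) s x].
have inC x : (x \in C) = connect (adj E0) r x by rewrite inE.
have inC' x : (x \in C') = connect (adj E0) s x by rewrite inE.
have CC' x : x \in C -> x \notin C'.
  rewrite inC inC' => rx; apply: contra nrs => sx.
  by apply: connect_trans rx _; rewrite adj_connect_sym.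
have VC' : V :\: C = C'.
  apply/setP => x; rewrite inE; apply/andP/idP => [[xC xV] | xC'].
    move: (cE r x rV xV); rewrite -(setD1K rsE) -/E0.
    case/connect_setU1 => [rx|[_ sx]|[rs' _]]; last by rewrite rs' in nrs.
    - by rewrite inC rx in xC.
    - by rewrite inC'.
  split; last by apply: connect_edges_on onE0 sV _; rewrite -inC'.
  by apply: contraL xC' => /CC'.
have edge_side a b : [set a; b] \in E0 -> (a \in C) = (b \in C) /\ (a \in C') = (b \in C').
  move=> ab; have cab := connect1 (ab : adj E0 a b).
  rewrite !inC !inC'; split; apply/idP/idP => h;
    by [apply: connect_trans h cab | apply: connect_trans h _; rewrite adj_connect_sym].
have E0C' : [set e in E0 | ~~ (e \subset C)] = [set e in E0 | e \subset C'].
  apply/setP => e; rewrite [LHS]in_set [RHS]in_set; apply: andb_id2l => eE0.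
  have [a [b [aV _ _ ee]]] := onE0 e eE0; subst e.
  rewrite !subUset !sub1set; have [<- <-] := edge_side a b eE0; rewrite !andbb.
  case aC: (a \in C); first by rewrite (negbTE (CC' a aC)).
  by rewrite -VC' inE aC aV.
split=> //.
- by apply/subsetP => x; rewrite inC; apply: connect_edges_on onE0 rV.
- exact: (component_rooted_tree r onE acE sE0E).
- by rewrite VC' E0C'; exact: (component_rooted_tree s onE acE sE0E).
Qed.

Lemma is_leaf_subgraph E F r s m : [set r; s] \in E -> F \subset E :\ [set r; s] ->
  is_leaf E r m -> is_leaf F s m.
Proof.
move=> rsE sF leafE u [umF c]; apply: (leafE u).
have /setD1P [umrs umE] := subsetP sF _ umF.
split=> //; apply: connect_trans (connect1 (_ : adj _ r s)) (connect_adjS _ c).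
  by rewrite /adj in_setD1 rsE andbT eq_sym.
by apply/subsetP => e /setD1P [eum /(subsetP sF) /setD1P [_ eE]]; apply/setD1P.
Qed.

Section Join.
Variables (V W : {set T}) (E F : {set {set T}}) (r s : T).
Hypotheses (treeE : is_rooted_tree V E r) (treeF : is_rooted_tree W F s)
  (dVW : [disjoint V & W]).
Local Notation G := ([set r; s] |: (E :|: F)).

Lemma join_rooted_tree : is_rooted_tree (V :|: W) G r.
Proof.
have [[rV onE cE acE] [sW onF cF acF]] := (treeE, treeF).
have rs : r != s by apply: contraTneq sW => <-; rewrite (disjointFr dVW rV).
have [sub_l sub_r] : E \subset G /\ F \subset G.
  by split; apply: subset_trans (subsetUr _ _); [apply: subsetUl | apply: subsetUr].
have c_r x : x \in V :|: W -> connect (adj G) r x.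
  rewrite in_setU => /orP [xV|xW]; first exact: connect_adjS sub_l (cE r x rV xV).
  apply: connect_trans (connect1 (setU11 _ _ : adj _ r s)) _.
  exact: connect_adjS sub_r (cF s x sW xW).
split.
- by rewrite in_setU rV.
- move=> e /setU1P [->|]; first by exists r, s; rewrite !in_setU rV sW orbT.
  by rewrite in_setU => /orP [/onE|/onF] [x [y [xV yV xy ->]]]; exists x, y;
    rewrite !in_setU ?xV ?yV ?orbT.
- by move=> x y xVW yVW; apply: connect_trans (c_r y yVW); rewrite adj_connect_sym c_r.
- apply/all_bridges_acyclic/all_bridges_setU1 => //.
  + by apply: (all_bridges_setU onE onF dVW); apply: acyclic_all_bridges.
  + apply/negP => /(connect_disjoint_setU onE onF dVW rV) /andP [_ sV].
    by rewrite (disjointFr dVW sV) in sW.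
Qed.

Lemma join_setD1 : G :\ [set r; s] = E :|: F.
Proof.
have [[rV onE _ _] [sW onF _ _]] := (treeE, treeF).
apply/setU1K; rewrite in_setU; apply/norP; split; apply/negP.
- by case/(edges_on_adj onE) => _ sV _; rewrite (disjointFr dVW sV) in sW.
- by case/(edges_on_adj onF) => rW _ _; rewrite (disjointFr dVW rV) in rW.
Qed.

Lemma join_component : [set x | connect (adj (E :|: F)) r x] = V.
Proof.
have [[rV onE cE _] [_ onF _ _]] := (treeE, treeF).
apply/setP => x; rewrite inE; apply/idP/idP => [|xV].
  by case/(connect_disjoint_setU onE onF dVW rV)/andP.
exact: connect_adjS (subsetUl _ _) (cE r x rV xV).
Qed.

Lemma join_edges_inside :
  [set e in E :|: F | e \subset V] = E /\ [set e in E :|: F | ~~ (e \subset V)] = F.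
Proof.
have [[_ onE _ _] [_ onF _ _]] := (treeE, treeF).
have subV e : e \in E -> e \subset V.
  by case/onE=> x [y [xV yV _ ->]]; rewrite subUset !sub1set xV yV.
have nsubV e : e \in F -> ~~ (e \subset V).
  by case/onF=> x [y [xW _ _ ->]]; rewrite subUset sub1set (disjointFl dVW xW).
split; apply/setP => e; rewrite !inE.
- case eE: (e \in E); first by rewrite subV.
  by case eF: (e \in F); rewrite // (negbTE (nsubV e eF)).
- case eF: (e \in F); first by rewrite orbT nsubV.
  by case eE: (e \in E); rewrite // subV.
Qed.

Lemma join_bridge_unique m u : m \in W -> [set r; u] \in G ->
  connect (adj (G :\ [set r; u])) u m -> u = s.
Proof.
move=> mW /setU1P [/set2_eq_cases [[_ ->] | [-> ->]] // | ruEF] cum.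
have [[rV onE _ _] [sW onF cF _]] := (treeE, treeF).
have ruE : [set r; u] \in E.
  move: ruEF; rewrite in_setU => /orP [//|/(edges_on_adj onF) [rW _ _]].
  by rewrite (disjointFr dVW rV) in rW.
have [_ uV ru] := edges_on_adj onE ruE.
have [_ _ _ /acyclic_all_bridges brG] := join_rooted_tree.
case/negP: (brG r u (setU1r _ ruEF) ru); rewrite adj_connect_sym in cum.
have rs_ru : [set r; s] != [set r; u].
  by apply: contraTneq ruEF => <-; rewrite -join_setD1 setD11.
apply: connect_trans (connect1 (_ : adj _ r s)) (connect_trans _ cum).
  by rewrite /adj in_setD1 rs_ru setU11.
apply: connect_adjS (cF s m sW mW); apply/subsetP => e eF.
rewrite in_setD1 !inE eF !orbT andbT.
by apply: contraTneq eF => ->; apply/negP => /(edges_on_adj onF) [rW _ _];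
  rewrite (disjointFr dVW rV) in rW.
Qed.

Lemma join_leaf m : m \in W -> is_leaf F s m -> is_leaf G r m.
Proof.
move=> mW leafF u [umG].
have [[rV onE _ _] [sW onF _ _]] := (treeE, treeF).
have notV x : x \in W -> x \notin V.
  by move=> xW; apply/negP => /(disjointFr dVW); rewrite xW.
move: (notV m mW); case/setU1P: umG => [/set2_eq_cases [[-> ->] | [_ ->]] | ].
- by rewrite join_setD1 -join_component inE => /negP.
- by rewrite rV.
rewrite in_setU => /orP [/(edges_on_adj onE) [_ -> //] | umF] _.
have ne : [set r; s] != [set u; m].
  apply: contraTneq umF => <-; apply/negP => /(edges_on_adj onF) [rW _ _].
  by move: (notV r rW); rewrite rV.
have onE' := edges_onS (subD1set E [set u; m]) onE.
have onF' := edges_onS (subD1set F [set u; m]) onF.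
rewrite setU1D1C // setDUl => /connect_setU1 [rm | [_ sm] | [rs _]].
- by case/(connect_disjoint_setU onE' onF' dVW rV)/andP: rm => _; apply/negP/notV.
- have dWV : [disjoint W & V] by rewrite disjoint_sym.
  rewrite setUC in sm.
  by case/(connect_disjoint_setU onF' onE' dWV sW)/andP: sm => sm _; apply: (leafF u).
- by case/(connect_disjoint_setU onE' onF' dVW rV)/andP: rs => _; apply/negP/notV.
Qed.

End Join.

Lemma rooted_tree_leaf_root V E r : is_rooted_tree V E r -> is_leaf E r r ->
  V = [set r] /\ E = set0.
Proof.
move=> [rV onE cE _] leaf_r.
have Vr : V = [set r].
  apply/setP => x; rewrite inE; apply/idP/eqP => [xV | ->] //; apply/eqP.
  apply: contraT => xr; case/connectP: (cE r x rV xV) => [[|w p] /= pp lp].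
    by rewrite lp eqxx in xr.
  case/andP: pp => rw _; case: (leaf_r w); split; last exact: connect0.
  by rewrite adj_sym in rw.
split=> //; apply/setP => e; rewrite inE; apply/negP => /onE [x [y []]].
by rewrite Vr !inE => /eqP -> /eqP ->; rewrite eqxx.
Qed.

Lemma rooted_tree_first_edge V E r m : is_rooted_tree V E r -> m \in V -> r != m ->
  exists s, ([set r; s] \in E) && connect (adj (E :\ [set r; s])) s m.
Proof.
move=> [rV _ cE _] mV rm; case/connectP: (cE r m rV mV) => p pp lp.
case/shortenP: pp lp => [[|s q] /= pp up _ lp]; first by rewrite lp eqxx in rm.
case/andP: pp => rs pq; exists s; rewrite (rs : [set r; s] \in E) /=.
apply/connectP; exists q => //; apply: path_avoid_edge pq.
by case/andP: up.
Qed.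

End Graphs.

Section Forests.
Variables (T : finType) (m : T).
Local Notation forest := (seq ({set T} * {set {set T}} * T)).
Implicit Types (f : forest) (A V X : {set T}) (E : {set {set T}}).

Definition forest_vertices f := \bigcup_(V <- map (fun t => t.1.1) f) V.

Lemma forest_verticesE X f : ordered_forest_on X f -> forest_vertices f = X.
Proof. by case. Qed.

Lemma ordered_forest_consE X V E r f : ordered_forest_on X ((V, E, r) :: f) ->
  [/\ is_rooted_tree V E r, ordered_forest_on (forest_vertices f) f,
      [disjoint V & forest_vertices f] & X = V :|: forest_vertices f].
Proof.
case=> trees disj <-; split.
- exact: trees (mem_head _ _).
- split=> // [t tf | i j ilt jlt ij]; first by apply: trees; rewrite inE tf orbT.
  exact: (disj i.+1 j.+1).
- rewrite -setI_eq0; apply/eqP/setP => x; rewrite !inE; apply/negP => /andP [xV].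
  rewrite /forest_vertices bigcup_seq => /bigcupP [W Wf xW].
  have := disj 0 (index W (map (fun t => t.1.1) f)).+1 isT.
  rewrite /= ltnS -(size_map (fun t => t.1.1)) index_mem Wf nth_index //.
  by move=> /(_ isT isT) /disjointFr/(_ xV); rewrite xW.
- by rewrite /= big_cons.
Qed.

Lemma ordered_forest_cons Y V E r f : is_rooted_tree V E r -> ordered_forest_on Y f ->
  [disjoint V & Y] -> ordered_forest_on (V :|: Y) ((V, E, r) :: f).
Proof.
move=> tr forest_f dVY; have := forest_verticesE forest_f.
case: forest_f => trees disj _ vf.
have sub_nth j : j < size f -> nth set0 (map (fun t => t.1.1) f) j \subset Y.
  move=> jlt; rewrite -vf /forest_vertices bigcup_seq; apply: bigcup_sup.
  by apply: mem_nth; rewrite size_map.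
split.
- by move=> t; rewrite inE => /orP [/eqP -> //|]; apply: trees.
- move=> [|i] [|j] //= ilt jlt ij; last exact: disj.
  + exact: disjointWr (sub_nth _ jlt) dVY.
  + by rewrite disjoint_sym; apply: disjointWr (sub_nth _ ilt) dVY.
- by rewrite /= big_cons -/(forest_vertices f) vf.
Qed.

Lemma size_forest_le X f : ordered_forest_on X f -> size f <= #|X|.
Proof.
elim: f X => [//|[[V E] r] f IH] X /ordered_forest_consE [[rV _ _ _] /IH le_f dVf ->].
rewrite /= (eqTleqif (leq_card_setU V _) dVf) -add1n.
by apply: leq_add le_f; rewrite card_gt0; apply/set0Pn; exists r.
Qed.

Fixpoint tree_of_forest f : {set {set T}} * T :=
  if f is t :: f' then
    ([set t.2; (tree_of_forest f').2] |: (t.1.2 :|: (tree_of_forest f').1), t.2)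
  else (set0, m).

Lemma tree_of_forestP X f : ordered_forest_on X f -> m \notin X ->
  is_rooted_tree (m |: X) (tree_of_forest f).1 (tree_of_forest f).2 /\
  is_leaf (tree_of_forest f).1 (tree_of_forest f).2 m.
Proof.
elim: f X => [|[[V E] r] f IH] X.
  case=> _ _ /=; rewrite big_nil => <- _; split; last by move=> u []; rewrite inE.
  split; first exact: setU11.
  - by move=> e; rewrite inE.
  - by move=> x y; rewrite setU0 !inE => /eqP -> /eqP ->.
  - by apply: all_bridges_acyclic => x y; rewrite inE.
case/ordered_forest_consE => trV forest_f dVf ->; rewrite in_setU negb_or => /andP [mV mf].
have [trf leaf_f] := IH _ forest_f mf.
have dVmf := disjoint_setU1r mV dVf.
split; last exact: join_leaf trV trf dVmf m (setU11 _ _) leaf_f.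
by rewrite /= setUCA; apply: join_rooted_tree.
Qed.

Definition next_root E r :=
  [pick s | ([set r; s] \in E) && connect (adj (E :\ [set r; s])) s m].

(* The argument k is fuel: each step removes at least the root, so #|A| steps suffice
   for a tree on A. *)
Fixpoint forest_of_tree k E r : forest :=
  if k is k'.+1 then
    if next_root E r is Some s then
      let E0 := E :\ [set r; s] in
      let V := [set x | connect (adj E0) r x] in
      (V, [set e in E0 | e \subset V], r)
        :: forest_of_tree k' [set e in E0 | ~~ (e \subset V)] s
    else [::]
  else [::].

Lemma forest_of_tree_set0 k r : forest_of_tree k set0 r = [::].
Proof.
case: k => //= k; rewrite /next_root.
by case: pickP => [s|//]; rewrite inE.
Qed.

Lemma next_root_join V W E F r s : is_rooted_tree V E r -> is_rooted_tree W F s ->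
  [disjoint V & W] -> m \in W -> next_root ([set r; s] |: (E :|: F)) r = Some s.
Proof.
move=> trE trF dVW mW; rewrite /next_root; case: pickP => [u /andP [ru cu] | none].
  by congr Some; apply: join_bridge_unique trE trF dVW m u mW ru cu.
have [sW _ cF _] := trF; move: (none s); rewrite setU11 (join_setD1 trE trF dVW).
by rewrite (connect_adjS (subsetUr E F) (cF s m sW mW)).
Qed.

Lemma forest_of_treeK X f k : ordered_forest_on X f -> m \notin X -> size f <= k ->
  forest_of_tree k (tree_of_forest f).1 (tree_of_forest f).2 = f.
Proof.
elim: f X k => [|[[V E] r] f IH] X k; first by rewrite /= forest_of_tree_set0.
case/ordered_forest_consE => trV forest_f dVf ->.
rewrite in_setU negb_or => /andP [mV mf]; case: k => [|k] //= le_fk.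
have [trf _] := tree_of_forestP forest_f mf.
have dVmf := disjoint_setU1r mV dVf.
rewrite (next_root_join trV trf dVmf (setU11 _ _)) /= (join_setD1 trV trf dVmf)
  (join_component trV trf dVmf).
have [-> ->] := join_edges_inside trV trf dVmf.
by rewrite (IH _ k forest_f mf le_fk).
Qed.

Lemma forest_of_treeP k A E r : #|A| <= k -> is_rooted_tree A E r -> m \in A ->
  is_leaf E r m ->
  ordered_forest_on (A :\ m) (forest_of_tree k E r) /\
  tree_of_forest (forest_of_tree k E r) = (E, r).
Proof.
elim: k A E r => [|k IH] A E r le_Ak trE mA leaf_m.
  by move: le_Ak; rewrite leqn0 cards_eq0 => /eqP A0; rewrite A0 inE in mA.
case: (eqVneq r m) => [rm | rm].
  subst r; have [-> ->] := rooted_tree_leaf_root trE leaf_m.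
  by rewrite forest_of_tree_set0; split=> //; split; rewrite //= big_nil setDv.
rewrite /= /next_root; case: pickP => [s /andP [rsE sm] | none]; last first.
  by have [s] := rooted_tree_first_edge trE mA rm; rewrite none.
set E0 := E :\ [set r; s]; set C := [set x | connect (adj E0) r x].
have [CA trC trR nrs] := rooted_tree_split trE rsE.
have mR : m \in A :\: C.
  rewrite inE mA andbT inE; apply: contra nrs => rm'.
  by apply: connect_trans rm' _; rewrite adj_connect_sym.
have le_Rk : #|A :\: C| <= k.
  rewrite -ltnS; apply: leq_trans le_Ak; apply: proper_card; apply/properP.
  by split; [exact: subsetDl | exists r; rewrite ?inE ?connect0 ?andbF //; case: trE].
have leaf_R : is_leaf [set e in E0 | ~~ (e \subset C)] s m.
  by apply: is_leaf_subgraph rsE _ leaf_m; apply/subsetP => e; rewrite inE => /andP [].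
have [forest_R tree_R] := IH _ _ _ le_Rk trR mR leaf_R.
split; last by rewrite /= tree_R /= setIdUN setD1K.
have -> : A :\ m = C :|: (A :\: C) :\ m.
  apply/setP => x; rewrite in_setU !in_setD1 in_setD; case xC: (x \in C) => //=.
  by rewrite (subsetP CA x xC) andbT; apply: contraTneq xC => ->; case/setDP: mR.
apply: ordered_forest_cons trC forest_R _.
by apply: disjointWr (subD1set _ _) _; rewrite disjoint_sym disjoints_subset setDE subsetIr.
Qed.

Lemma forest_of_tree_bij A : m \in A ->
  bij_between (fun t => rooted_tree_on A t /\ is_leaf t.1 t.2 m)
              (ordered_forest_on (A :\ m)) (fun t => forest_of_tree #|A| t.1 t.2).
Proof.
move=> mA; have forestP t := @forest_of_treeP #|A| A t.1 t.2 (leqnn _).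
split.
- by move=> t [trE leaf_m]; case: (forestP t trE mA leaf_m).
- move=> [E1 r1] [E2 r2] [tr1 leaf1] [tr2 leaf2] e.
  by rewrite -(forestP (E1, r1) tr1 mA leaf1).2 -(forestP (E2, r2) tr2 mA leaf2).2 /= e.
- move=> f forest_f; have mAm : m \notin A :\ m by rewrite setD11.
  have [tr_f leaf_f] := tree_of_forestP forest_f mAm; rewrite setD1K // in tr_f.
  exists (tree_of_forest f); split => //; apply: (forest_of_treeK forest_f mAm).
  exact: leq_trans (size_forest_le forest_f) (subset_leq_card (subD1set _ _)).
Qed.

End Forests.

Theorem lemma2p2 (n : nat) (A : {set 'I_n.+1})
  (hA : A \subset [set i : 'I_n.+1 | 0 < val i])
  (hne : A != set0)
  (m : 'I_n.+1) (hm : m \in A) (hmax : forall a, a \in A -> val a <= val m) :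
  exists rho : {set {set 'I_n.+1}} * 'I_n.+1 ->
               seq ({set 'I_n.+1} * {set {set 'I_n.+1}} * 'I_n.+1),
    bij_between (fun t => rooted_tree_on A t /\ is_leaf t.1 t.2 m)
                (ordered_forest_on (A :\ m)) rho.
Proof. by exists (fun t => forest_of_tree m #|A| t.1 t.2); apply: forest_of_tree_bij. Qed.
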